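(* Let $A$ be an associative unital ring and $\mathfrak{C}$ an $A$-coring with coproduct $\Delta$ and counit $\varepsilon$ (Sweedler notation $\Delta(c)=c_{(1)}\otimes_A c_{(2)}$). Consider pairs $(\pi,\Theta)$, where $\Theta:A\to\mathfrak{C}$ is an $(A,A)$-bimodule map and $\pi:\mathfrak{C}\otimes_A\mathfrak{C}\to\mathfrak{C}$ is an $(A,A)$-bimodule map which is a $(\mathfrak{C},\mathfrak{C})$-bicomodule map, i.e. $c_{(1)}\otimes_A\pi(c_{(2)}\otimes_A c')=\Delta(\pi(c\otimes_A c'))=\pi(c\otimes_A c'_{(1)})\otimes_A c'_{(2)}$ for all $c,c'\in\mathfrak{C}$, such that $\pi\circ(I_{\mathfrak{C}}\otimes_A\Theta)=\pi\circ(\Theta\otimes_A I_{\mathfrak{C}})=I_{\mathfrak{C}}$ (using the identifications $\mathfrak{C}\cong\mathfrak{C}\otimes_A A\cong A\otimes_A\mathfrak{C}$). Consider also reduced Frobenius systems $(\gamma,e)$ for $\mathfrak{C}$, i.e. pairs consisting of an element $e\in\mathfrak{C}^A=\{c\in\mathfrak{C}\mid ac=ca\ \forall a\in A\}$ and an $(A,A)$-bimodule map $\gamma:\mathfrak{C}\otimes_A\mathfrak{C}\to A$ such that for all $c,c'\in\mathfrak{C}$: $c_{(1)}\gamma(c_{(2)}\otimes_A c')=\gamma(c\otimes_A c'_{(1)})c'_{(2)}$ and $\gamma(c\otimes_A e)=\gamma(e\otimes_A c)=\varepsilon(c)$. Then the pairs $(\pi,\Theta)$ are in one-to-one correspondence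 with the reduced Frobenius systems $(\gamma,e)$, via $(\pi,\Theta)\mapsto(\varepsilon\circ\pi,\Theta(1_A))$.
   Context: An $A$-coring $\mathfrak{C}$ is an $(A,A)$-bimodule with $(A,A)$-bimodule maps $\Delta:\mathfrak{C}\to\mathfrak{C}\otimes_A\mathfrak{C}$ and $\varepsilon:\mathfrak{C}\to A$ satisfying coassociativity $(I_{\mathfrak{C}}\otimes_A\Delta)\circ\Delta=(\Delta\otimes_A I_{\mathfrak{C}})\circ\Delta$ and counitality $(I_{\mathfrak{C}}\otimes_A\varepsilon)\circ\Delta=(\varepsilon\otimes_A I_{\mathfrak{C}})\circ\Delta=I_{\mathfrak{C}}$. The $(\mathfrak{C},\mathfrak{C})$-bicomodule structures are: on $\mathfrak{C}$ both coactions are $\Delta$; on $\mathfrak{C}\otimes_A\mathfrak{C}$ the left coaction is $\Delta\otimes_A I_{\mathfrak{C}}$ and the right coaction is $I_{\mathfrak{C}}\otimes_A\Delta$. *)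

(* There is no tensor product over a non-commutative ring in the libraries,
   so tensor products M (x)_A N are given as (A,A)-bimodules T together with
   a map t : M -> N -> T satisfying the universal property of M (x)_A N. *)
From HB Require Import structures.
From mathcomp Require Import all_boot all_order all_algebra.
Set Implicit Arguments. Unset Strict Implicit. Unset Printing Implicit Defensive.
Import GRing.Theory.
Local Open Scope ring_scope.

Definition additive_map {U V : zmodType} (f : U -> V) : Prop :=
  forall x y, f (x + y) = f x + f y.

Definition bimod_axioms (A : pzRingType) (M : zmodType)
  (l : A -> M -> M) (r : M -> A -> M) : Prop :=
  (forall a, additive_map (l a)) /\ (forall m, additive_map (fun a => l a m)) /\
  (forall a b m, l (a * b) m = l a (l b m)) /\ (forall m, l 1 m = m) /\
  (forall m, additive_map (r m)) /\ (forall a, additive_map (fun m => r m a)) /\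
  (forall m a b, r m (a * b) = r (r m a) b) /\ (forall m, r m 1 = m) /\
  (forall a m b, l a (r m b) = r (l a m) b).

Record bimod (A : pzRingType) := Bimod {
  bcar :> zmodType;
  lact : A -> bcar -> bcar;
  ract : bcar -> A -> bcar;
  bimodP : bimod_axioms lact ract }.
Arguments lact {A M} : rename.
Arguments ract {A M} : rename.

Definition bimod_map {A : pzRingType} {M N : bimod A} (f : M -> N) : Prop :=
  [/\ additive_map f, (forall a m, f (lact a m) = lact a (f m))
    & (forall m a, f (ract m a) = ract (f m) a)].
Definition bimod_map_toA {A : pzRingType} {M : bimod A} (f : M -> A) : Prop :=
  [/\ additive_map f, (forall a m, f (lact a m) = a * f m)
    & (forall m a, f (ract m a) = f m * a)].
Definition bimod_map_fromA {A : pzRingType} {M : bimod A} (f : A -> M) : Prop :=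
  [/\ additive_map f, (forall a x, f (a * x) = lact a (f x))
    & (forall x a, f (x * a) = ract (f x) a)].

Definition is_tensor {A : pzRingType} {M N T : bimod A} (t : M -> N -> T) : Prop :=
  (forall m, additive_map (t m)) /\ (forall n, additive_map (fun m => t m n)) /\
  (forall m a n, t (ract m a) n = t m (lact a n)) /\
  (forall a m n, lact a (t m n) = t (lact a m) n) /\
  (forall m n a, ract (t m n) a = t m (ract n a)) /\
      (forall (Z : zmodType) (f : M -> N -> Z),
         (forall m, additive_map (f m)) -> (forall n, additive_map (fun m => f m n)) ->
         (forall m a n, f (ract m a) n = f m (lact a n)) ->
         exists g : T -> Z, additive_map g /\ forall m n, g (t m n) = f m n) /\
      (forall (Z : zmodType) (g h : T -> Z), additive_map g -> additive_map h ->
         (forall m n, g (t m n) = h (t m n)) -> g = h).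

Definition ext_on {A : pzRingType} {M N T : bimod A} (t : M -> N -> T)
  {Z : zmodType} (F : T -> Z) (f : M -> N -> Z) : Prop :=
  additive_map F /\ forall m n, F (t m n) = f m n.

Section Coring.
Variables (A : pzRingType) (C C2 C3l C3r : bimod A).
(* C2 = C (x) C,  C3l = C (x) (C (x) C),  C3r = (C (x) C) (x) C,
   al : C3r -> C3l and be : C3l -> C3r the associativity isomorphisms *)
Variables (t2 : C -> C -> C2) (t3l : C -> C2 -> C3l) (t3r : C2 -> C -> C3r).
Variables (al : C3r -> C3l) (be : C3l -> C3r).
Variables (Delta : C -> C2) (eps : C -> A).

Definition is_coring : Prop :=
  [/\ bimod_map Delta, bimod_map_toA eps,
      (* coassociativity (I (x) Delta) o Delta = (Delta (x) I) o Delta *)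
      (forall (ID : C2 -> C3l) (DI : C2 -> C3r),
         ext_on t2 ID (fun c c' => t3l c (Delta c')) ->
         ext_on t2 DI (fun c c' => t3r (Delta c) c') ->
         forall c, ID (Delta c) = al (DI (Delta c))),
      (* (I (x) eps) o Delta = I, with C (x) A = C *)
      (forall F : C2 -> C, ext_on t2 F (fun c c' => ract c (eps c')) ->
         forall c, F (Delta c) = c)
    & (* (eps (x) I) o Delta = I, with A (x) C = C *)
      (forall F : C2 -> C, ext_on t2 F (fun c c' => lact (eps c) c') ->
         forall c, F (Delta c) = c)].

Definition pi_theta (pi : C2 -> C) (Theta : A -> C) : Prop :=
  [/\ bimod_map pi, bimod_map_fromA Theta,
      (* c(1) (x) pi(c(2) (x) c') = Delta (pi (c (x) c')) *)
      (forall (DI : C2 -> C3r) (Ipi : C3l -> C2),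
         ext_on t2 DI (fun c c' => t3r (Delta c) c') ->
         ext_on t3l Ipi (fun c x => t2 c (pi x)) ->
         forall c c', Ipi (al (DI (t2 c c'))) = Delta (pi (t2 c c'))),
      (* pi(c (x) c'(1)) (x) c'(2) = Delta (pi (c (x) c')) *)
      (forall (ID : C2 -> C3l) (piI : C3r -> C2),
         ext_on t2 ID (fun c c' => t3l c (Delta c')) ->
         ext_on t3r piI (fun x c => t2 (pi x) c) ->
         forall c c', piI (be (ID (t2 c c'))) = Delta (pi (t2 c c')))
    & (* pi o (I (x) Theta) = pi o (Theta (x) I) = I *)
      (forall c, pi (t2 c (Theta 1)) = c /\ pi (t2 (Theta 1) c) = c)].

Definition reduced_frobenius (gamma : C2 -> A) (e : C) : Prop :=
  [/\ bimod_map_toA gamma,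
      (forall a, lact a e = ract e a),
      (* c(1) gamma(c(2) (x) c') = gamma(c (x) c'(1)) c'(2) *)
      (forall (DI : C2 -> C3r) (Igam : C3l -> C) (ID : C2 -> C3l) (gamI : C3r -> C),
         ext_on t2 DI (fun c c' => t3r (Delta c) c') ->
         ext_on t3l Igam (fun c x => ract c (gamma x)) ->
         ext_on t2 ID (fun c c' => t3l c (Delta c')) ->
         ext_on t3r gamI (fun x c => lact (gamma x) c) ->
         forall c c', Igam (al (DI (t2 c c'))) = gamI (be (ID (t2 c c'))))
    & (forall c, gamma (t2 c e) = eps c /\ gamma (t2 e c) = eps c)].
End Coring.

From mathcomp Require Import all_boot all_order all_algebra.
From Stdlib Require Import FunctionalExtensionality.
Set Implicit Arguments. Unset Strict Implicit. Unset Printing Implicit Defensive.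
Import GRing.Theory.
Local Open Scope ring_scope.

(* A left-colinear bimodule map pi is recovered from gamma = eps o pi as
   pi(c (x) c') = c(1) gamma(c(2) (x) c'): apply I (x) eps to
   c(1) (x) pi(c(2) (x) c') = Delta(pi(c (x) c')) and use counitality; likewise
   on the right, and Theta(a) = a Theta(1).  Hence both sides of the Frobenius
   condition equal pi, and (pi, Theta) is determined by (gamma, e).
   Conversely, a reduced Frobenius system gives pi := (I (x) gamma)(Delta (x) I),
   which by the Frobenius condition is also (gamma (x) I)(I (x) Delta); its
   colinearity on either side is coassociativity, and its unit laws come from
   gamma(c (x) e) = gamma(e (x) c) = eps(c) and counitality. *)

Section Bimodule.
Variables (A : pzRingType) (M : bimod A).
Implicit Types (a b : A) (m : M).

Lemma lactDr a : additive_map (@lact A M a). Proof. by case: (bimodP M). Qed.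
Lemma lactDl m : additive_map (lact^~ m). Proof. by case: (bimodP M) => _ []. Qed.
Lemma lactM a b m : lact (a * b) m = lact a (lact b m).
Proof. by case: (bimodP M) => _ [] _ []. Qed.
Lemma lact1 m : lact 1 m = m. Proof. by case: (bimodP M) => _ [] _ [] _ []. Qed.
Lemma ractDr m : additive_map (ract m).
Proof. by case: (bimodP M) => _ [] _ [] _ [] _ []. Qed.
Lemma ractDl a : additive_map (@ract A M ^~ a).
Proof. by case: (bimodP M) => _ [] _ [] _ [] _ [] _ []. Qed.
Lemma ractM m a b : ract m (a * b) = ract (ract m a) b.
Proof. by case: (bimodP M) => _ [] _ [] _ [] _ [] _ [] _ []. Qed.
Lemma lact_ract a m b : lact a (ract m b) = ract (lact a m) b.
Proof. by case: (bimodP M) => _ [] _ [] _ [] _ [] _ [] _ [] _ []. Qed.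

Lemma bimod_map_fromA_lact (Theta : A -> M) :
  bimod_map_fromA Theta -> forall a, Theta a = lact a (Theta 1).
Proof. by case=> _ Tl _ a; rewrite -Tl mulr1. Qed.

Lemma bimod_map_fromA_central (Theta : A -> M) :
  bimod_map_fromA Theta -> forall a, lact a (Theta 1) = ract (Theta 1) a.
Proof. by case=> _ Tl Tr a; rewrite -Tl -Tr mulr1 mul1r. Qed.

Lemma central_bimod_map_fromA (e : M) :
  (forall a, lact a e = ract e a) -> bimod_map_fromA (lact^~ e).
Proof.
move=> e_central; split; first exact: lactDl.
- by move=> a x; rewrite lactM.
- by move=> x a; rewrite lactM e_central lact_ract.
Qed.

End Bimodule.

Lemma additive_comp (U V W : zmodType) (f : U -> V) (g : V -> W) :
  additive_map f -> additive_map g -> additive_map (fun x => g (f x)).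
Proof. by move=> fA gA x y; rewrite fA gA. Qed.

Lemma bimod_map_toA_comp (A : pzRingType) (M N : bimod A) (f : M -> N) (g : N -> A) :
  bimod_map f -> bimod_map_toA g -> bimod_map_toA (fun m => g (f m)).
Proof.
case=> fA fL fR [gA gL gR]; split; first exact: additive_comp fA gA.
- by move=> a m; rewrite fL gL.
- by move=> m a; rewrite fR gR.
Qed.

Section Tensor.
Variables (A : pzRingType) (M N T : bimod A) (t : M -> N -> T).
Hypothesis Ht : is_tensor t.

Lemma tensorDr m : additive_map (t m). Proof. by case: Ht. Qed.
Lemma tensorDl n : additive_map (t^~ n). Proof. by case: Ht => _ []. Qed.
Lemma tensor_balanced m a n : t (ract m a) n = t m (lact a n).
Proof. by case: Ht => _ [] _ []. Qed.
Lemma lact_tensor a m n : lact a (t m n) = t (lact a m) n.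
Proof. by case: Ht => _ [] _ [] _ []. Qed.
Lemma ract_tensor m n a : ract (t m n) a = t m (ract n a).
Proof. by case: Ht => _ [] _ [] _ [] _ []. Qed.

Lemma tensor_map_eq (Z : zmodType) (g h : T -> Z) :
  additive_map g -> additive_map h -> (forall m n, g (t m n) = h (t m n)) -> g = h.
Proof. by case: Ht => _ [] _ [] _ [] _ [] _ [] _; apply. Qed.

Lemma tensor_ext (Z : zmodType) (g h : T -> Z) :
  additive_map g -> additive_map h -> (forall m n, g (t m n) = h (t m n)) -> g =1 h.
Proof. by move=> gA hA gh; rewrite (tensor_map_eq gA hA gh). Qed.

Lemma tensor_lift (Z : zmodType) (f : M -> N -> Z) :
  (forall m, additive_map (f m)) -> (forall n, additive_map (f^~ n)) ->
  (forall m a n, f (ract m a) n = f m (lact a n)) -> exists g, ext_on t g f.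
Proof. by case: Ht => _ [] _ [] _ [] _ [] _ [] H _; apply: H. Qed.

Lemma lift_ract_toA (g : N -> A) :
  additive_map g -> (forall a n, g (lact a n) = a * g n) ->
  exists G : T -> M, ext_on t G (fun m n => ract m (g n)).
Proof.
move=> gA gL; apply: tensor_lift.
- by move=> m x y; rewrite gA ractDr.
- by move=> n x y; rewrite ractDl.
- by move=> m a n; rewrite gL ractM.
Qed.

Lemma lift_lact_toA (g : M -> A) :
  additive_map g -> (forall m a, g (ract m a) = g m * a) ->
  exists G : T -> N, ext_on t G (fun m n => lact (g m) n).
Proof.
move=> gA gR; apply: tensor_lift.
- by move=> m x y; rewrite lactDr.
- by move=> n x y; rewrite gA lactDl.
- by move=> m a n; rewrite gR lactM.
Qed.

End Tensor.

Lemma lift_mapr (A : pzRingType) (M N T P S : bimod A)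
    (t : M -> N -> T) (s : M -> P -> S) (f : N -> P) :
  is_tensor t -> is_tensor s ->
  additive_map f -> (forall a n, f (lact a n) = lact a (f n)) ->
  exists G : T -> S, ext_on t G (fun m n => s m (f n)).
Proof.
move=> Ht Hs fA fL; apply: (tensor_lift Ht).
- by move=> m x y; rewrite fA (tensorDr Hs).
- by move=> n x y; rewrite (tensorDl Hs).
- by move=> m a n; rewrite fL (tensor_balanced Hs).
Qed.

Lemma lift_mapl (A : pzRingType) (M N T P S : bimod A)
    (t : M -> N -> T) (s : P -> N -> S) (f : M -> P) :
  is_tensor t -> is_tensor s ->
  additive_map f -> (forall m a, f (ract m a) = ract (f m) a) ->
  exists G : T -> S, ext_on t G (fun m n => s (f m) n).
Proof.
move=> Ht Hs fA fR; apply: (tensor_lift Ht).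
- by move=> m x y; rewrite (tensorDr Hs).
- by move=> n x y; rewrite fA (tensorDl Hs).
- by move=> m a n; rewrite fR (tensor_balanced Hs).
Qed.

Lemma tensor3r_ext (A : pzRingType) (M N T P S : bimod A)
    (t : M -> N -> T) (s : T -> P -> S) (Z : zmodType) (g h : S -> Z) :
  is_tensor t -> is_tensor s -> additive_map g -> additive_map h ->
  (forall u v w, g (s (t u v) w) = h (s (t u v) w)) -> g =1 h.
Proof.
move=> Ht Hs gA hA gh; apply: (tensor_ext Hs) => // y w; move: y.
apply: (tensor_ext Ht); [exact: additive_comp (tensorDl Hs w) gA |
  exact: additive_comp (tensorDl Hs w) hA | move=> u v; exact: gh].
Qed.

Lemma tensor3l_ext (A : pzRingType) (M N T P S : bimod A)
    (t : N -> P -> T) (s : M -> T -> S) (Z : zmodType) (g h : S -> Z) :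
  is_tensor t -> is_tensor s -> additive_map g -> additive_map h ->
  (forall u v w, g (s u (t v w)) = h (s u (t v w))) -> g =1 h.
Proof.
move=> Ht Hs gA hA gh; apply: (tensor_ext Hs) => // u; apply: (tensor_ext Ht);
  [exact: additive_comp (tensorDr Hs u) gA |
   exact: additive_comp (tensorDr Hs u) hA | exact: gh u].
Qed.

Section Coring.
Variables (A : pzRingType) (C C2 C3l C3r : bimod A)
  (t2 : C -> C -> C2) (t3l : C -> C2 -> C3l) (t3r : C2 -> C -> C3r)
  (al : C3r -> C3l) (be : C3l -> C3r) (Delta : C -> C2) (eps : C -> A).
Hypotheses (H2 : is_tensor t2) (H3l : is_tensor t3l) (H3r : is_tensor t3r)
  (alA : additive_map al) (alE : forall x y z, al (t3r (t2 x y) z) = t3l x (t2 y z))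
  (beA : additive_map be) (beE : forall x y z, be (t3l x (t2 y z)) = t3r (t2 x y) z)
  (Hcor : is_coring t2 t3l t3r al Delta eps).

Lemma Delta_bimod : bimod_map Delta. Proof. by case: Hcor. Qed.
Lemma Delta_additive : additive_map Delta. Proof. by case: Delta_bimod. Qed.
Lemma Delta_lact a c : Delta (lact a c) = lact a (Delta c).
Proof. by case: Delta_bimod. Qed.
Lemma Delta_ract c a : Delta (ract c a) = ract (Delta c) a.
Proof. by case: Delta_bimod. Qed.
Lemma eps_bimod : bimod_map_toA eps. Proof. by case: Hcor. Qed.

Lemma coassoc (ID : C2 -> C3l) (DI : C2 -> C3r) :
  ext_on t2 ID (fun c c' => t3l c (Delta c')) ->
  ext_on t2 DI (fun c c' => t3r (Delta c) c') ->
  forall c, ID (Delta c) = al (DI (Delta c)).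
Proof. by case: Hcor => _ _ H _ _; apply: H. Qed.

Lemma counitR (F : C2 -> C) :
  ext_on t2 F (fun c c' => ract c (eps c')) -> forall c, F (Delta c) = c.
Proof. by case: Hcor => _ _ _ H _; apply: H. Qed.

Lemma counitL (G : C2 -> C) :
  ext_on t2 G (fun c c' => lact (eps c) c') -> forall c, G (Delta c) = c.
Proof. by case: Hcor => _ _ _ _ H; apply: H. Qed.

Lemma exists_DeltaI : exists DI, ext_on t2 DI (fun c c' => t3r (Delta c) c').
Proof. exact: lift_mapl H2 H3r Delta_additive Delta_ract. Qed.

Lemma exists_IDelta : exists ID, ext_on t2 ID (fun c c' => t3l c (Delta c')).
Proof. exact: lift_mapr H2 H3l Delta_additive Delta_lact. Qed.

Lemma exists_Ieps : exists F : C2 -> C, ext_on t2 F (fun c c' => ract c (eps c')).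
Proof. by case: eps_bimod => epsA epsL _; apply: lift_ract_toA. Qed.

Lemma exists_epsI : exists G : C2 -> C, ext_on t2 G (fun c c' => lact (eps c) c').
Proof. by case: eps_bimod => epsA _ epsR; apply: lift_lact_toA. Qed.

Lemma alK : cancel al be.
Proof.
apply: (tensor3r_ext H2 H3r) => //; first exact: additive_comp alA beA.
by move=> u v w; rewrite alE beE.
Qed.

Definition left_colinear (pi : C2 -> C) : Prop :=
  forall (DI : C2 -> C3r) (Ipi : C3l -> C2),
    ext_on t2 DI (fun c c' => t3r (Delta c) c') ->
    ext_on t3l Ipi (fun c x => t2 c (pi x)) ->
    forall c c', Ipi (al (DI (t2 c c'))) = Delta (pi (t2 c c')).

Definition right_colinear (pi : C2 -> C) : Prop :=
  forall (ID : C2 -> C3l) (piI : C3r -> C2),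
    ext_on t2 ID (fun c c' => t3l c (Delta c')) ->
    ext_on t3r piI (fun x c => t2 (pi x) c) ->
    forall c c', piI (be (ID (t2 c c'))) = Delta (pi (t2 c c')).

Section Recovery.
Variable pi : C2 -> C.
Hypothesis pi_bimod : bimod_map pi.

Lemma pi_from_gammaL DI Igam : left_colinear pi ->
  ext_on t2 DI (fun c c' => t3r (Delta c) c') ->
  ext_on t3l Igam (fun c x => ract c (eps (pi x))) ->
  forall x, Igam (al (DI x)) = pi x.
Proof.
move=> pi_colin hDI hIg; case: pi_bimod => piA piL _.
have [Ipi hIpi] := lift_mapr H3l H2 piA piL.
have [F hF] := exists_Ieps.
have IgamE : Igam =1 (fun z => F (Ipi z)).
  apply: (tensor_ext H3l); [exact: hIg.1 | exact: additive_comp hIpi.1 hF.1 |].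
  by move=> c x; rewrite hIg.2 hIpi.2 hF.2.
apply: (tensor_ext H2); [exact: additive_comp (additive_comp hDI.1 alA) hIg.1 | exact: piA |].
by move=> c c'; rewrite IgamE (pi_colin _ _ hDI hIpi) (counitR hF).
Qed.

Lemma pi_from_gammaR ID gamI : right_colinear pi ->
  ext_on t2 ID (fun c c' => t3l c (Delta c')) ->
  ext_on t3r gamI (fun x c => lact (eps (pi x)) c) ->
  forall x, gamI (be (ID x)) = pi x.
Proof.
move=> pi_colin hID hgI; case: pi_bimod => piA _ piR.
have [piI hpiI] := lift_mapl H3r H2 piA piR.
have [G hG] := exists_epsI.
have gamIE : gamI =1 (fun z => G (piI z)).
  apply: (tensor_ext H3r); [exact: hgI.1 | exact: additive_comp hpiI.1 hG.1 |].
  by move=> x c; rewrite hgI.2 hpiI.2 hG.2.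
apply: (tensor_ext H2); [exact: additive_comp (additive_comp hID.1 beA) hgI.1 | exact: piA |].
by move=> c c'; rewrite gamIE (pi_colin _ _ hID hpiI) (counitL hG).
Qed.

End Recovery.

Lemma reduced_frobenius_of_pi_theta pi Theta :
  pi_theta t2 t3l t3r al be Delta pi Theta ->
  reduced_frobenius t2 t3l t3r al be Delta eps (fun x => eps (pi x)) (Theta 1).
Proof.
case=> pi_bimod Theta_bimod pi_colinL pi_colinR pi_unit; split.
- exact: bimod_map_toA_comp pi_bimod eps_bimod.
- exact: bimod_map_fromA_central.
- move=> DI Igam ID gamI hDI hIg hID hgI c c'.
  by rewrite (pi_from_gammaL pi_bimod pi_colinL hDI hIg)
             (pi_from_gammaR pi_bimod pi_colinR hID hgI).
- by move=> c; case: (pi_unit c) => -> ->.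
Qed.

Lemma pi_theta_inj pi Theta pi' Theta' :
  pi_theta t2 t3l t3r al be Delta pi Theta ->
  pi_theta t2 t3l t3r al be Delta pi' Theta' ->
  (fun x => eps (pi x)) = (fun x => eps (pi' x)) -> Theta 1 = Theta' 1 ->
  pi = pi' /\ Theta = Theta'.
Proof.
case=> pi_bimod Theta_bimod pi_colin _ _ [pi'_bimod Theta'_bimod pi'_colin _ _].
move=> eq_gamma eq_e; split; apply: functional_extensionality.
- have [DI hDI] := exists_DeltaI.
  have [gA gL _] := bimod_map_toA_comp pi_bimod eps_bimod.
  have [Igam hIg] := lift_ract_toA H3l gA gL.
  have hIg' : ext_on t3l Igam (fun c x => ract c (eps (pi' x))).
    by split=> [|c x]; [exact: hIg.1 | rewrite hIg.2 (congr1 (fun f => f x) eq_gamma)].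
  move=> x; rewrite -(pi_from_gammaL pi_bimod pi_colin hDI hIg).
  exact: (pi_from_gammaL pi'_bimod pi'_colin hDI hIg').
- move=> a; rewrite (bimod_map_fromA_lact Theta_bimod).
  by rewrite (bimod_map_fromA_lact Theta'_bimod) eq_e.
Qed.

Section FrobeniusSystem.
Variables (gamma : C2 -> A) (e : C).
Hypothesis Hfr : reduced_frobenius t2 t3l t3r al be Delta eps gamma e.
Variables (DI : C2 -> C3r) (ID : C2 -> C3l) (Igam : C3l -> C) (gamI : C3r -> C).
Hypotheses (hDI : ext_on t2 DI (fun c c' => t3r (Delta c) c'))
  (hID : ext_on t2 ID (fun c c' => t3l c (Delta c')))
  (hIg : ext_on t3l Igam (fun c x => ract c (gamma x)))
  (hgI : ext_on t3r gamI (fun x c => lact (gamma x) c)).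

Definition frobenius_pi (x : C2) : C := Igam (al (DI x)).

Lemma Igam_al_additive : additive_map (fun z => Igam (al z)).
Proof. exact: additive_comp alA hIg.1. Qed.

Lemma gamI_be_additive : additive_map (fun z => gamI (be z)).
Proof. exact: additive_comp beA hgI.1. Qed.

Lemma Igam_al_t3r u v w : Igam (al (t3r (t2 u v) w)) = ract u (gamma (t2 v w)).
Proof. by rewrite alE hIg.2. Qed.

Lemma gamI_be_t3l u v w : gamI (be (t3l u (t2 v w))) = lact (gamma (t2 u v)) w.
Proof. by rewrite beE hgI.2. Qed.

Lemma Igam_al_lact a z : Igam (al (lact a z)) = lact a (Igam (al z)).
Proof.
move: z; apply: (tensor3r_ext H2 H3r).
- exact: additive_comp (lactDr a) Igam_al_additive.
- exact: additive_comp Igam_al_additive (lactDr a).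
by move=> u v w; rewrite (lact_tensor H3r) (lact_tensor H2) !Igam_al_t3r lact_ract.
Qed.

Lemma Igam_al_ract a z : Igam (al (ract z a)) = ract (Igam (al z)) a.
Proof.
case: Hfr => -[_ _ gR] _ _ _; move: z; apply: (tensor3r_ext H2 H3r).
- exact: additive_comp (ractDl a) Igam_al_additive.
- exact: additive_comp Igam_al_additive (ractDl a).
by move=> u v w; rewrite (ract_tensor H3r) !Igam_al_t3r -(ract_tensor H2) gR ractM.
Qed.

Lemma gamI_be_ract a z : gamI (be (ract z a)) = ract (gamI (be z)) a.
Proof.
move: z; apply: (tensor3l_ext H2 H3l).
- exact: additive_comp (ractDl a) gamI_be_additive.
- exact: additive_comp gamI_be_additive (ractDl a).
by move=> u v w; rewrite (ract_tensor H3l) (ract_tensor H2) !gamI_be_t3l lact_ract.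
Qed.

Lemma frobenius_pi_t2 c c' : frobenius_pi (t2 c c') = Igam (al (t3r (Delta c) c')).
Proof. by rewrite /frobenius_pi hDI.2. Qed.

Lemma frobenius_pi_additive : additive_map frobenius_pi.
Proof. exact: additive_comp hDI.1 Igam_al_additive. Qed.

Lemma frobenius_piE : frobenius_pi =1 (fun x => gamI (be (ID x))).
Proof.
case: Hfr => _ _ frob _; apply: (tensor_ext H2) => [||c c'].
- exact: frobenius_pi_additive.
- exact: additive_comp hID.1 gamI_be_additive.
- exact: (frob _ _ _ _ hDI hIg hID hgI).
Qed.

Lemma frobenius_pi_bimod : bimod_map frobenius_pi.
Proof.
split; first exact: frobenius_pi_additive.
- move=> a; apply: (tensor_ext H2) => [||c c'].
  + exact: additive_comp (lactDr a) frobenius_pi_additive.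
  + exact: additive_comp frobenius_pi_additive (lactDr a).
  by rewrite (lact_tensor H2) !frobenius_pi_t2 Delta_lact -(lact_tensor H3r) Igam_al_lact.
- move=> x a; move: x; apply: (tensor_ext H2) => [||c c'].
  + exact: additive_comp (ractDl a) frobenius_pi_additive.
  + exact: additive_comp frobenius_pi_additive (ractDl a).
  by rewrite (ract_tensor H2) !frobenius_pi_t2 -(ract_tensor H3r) Igam_al_ract.
Qed.

Lemma frobenius_pi_left_colinear : left_colinear frobenius_pi.
Proof.
move=> DI' Ipi hDI' hIpi c c'; rewrite hDI'.2 frobenius_pi_t2.
pose f z := Igam (al (t3r z c')).
have fA : additive_map f := additive_comp (tensorDl H3r c') Igam_al_additive.
have fL a z : f (lact a z) = lact a (f z) by rewrite /f -(lact_tensor H3r) Igam_al_lact.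
have [N hN] := lift_mapr H3l H2 fA fL.
have IpiE : (fun y => Ipi (al (t3r y c'))) =1 (fun y => N (ID y)).
  apply: (tensor_ext H2) => [||u v].
  - exact: additive_comp (additive_comp (tensorDl H3r c') alA) hIpi.1.
  - exact: additive_comp hID.1 hN.1.
  by rewrite alE hIpi.2 hID.2 hN.2 frobenius_pi_t2.
have N_al v : (fun z => N (al (t3r z v))) =1 (ract^~ (gamma (t2 v c'))).
  apply: (tensor_ext H2) => [||p q].
  - exact: additive_comp (additive_comp (tensorDl H3r v) alA) hN.1.
  - exact: ractDl.
  by rewrite alE hN.2 /f Igam_al_t3r (ract_tensor H2).
have DeltaE : (fun y => Delta (f y)) =1 (fun y => N (al (DI y))).
  apply: (tensor_ext H2) => [||u v].
  - exact: additive_comp fA Delta_additive.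
  - exact: additive_comp (additive_comp hDI.1 alA) hN.1.
  by rewrite /f Igam_al_t3r Delta_ract hDI.2 N_al.
by rewrite IpiE (coassoc hID hDI) -DeltaE.
Qed.

Lemma frobenius_pi_right_colinear : right_colinear frobenius_pi.
Proof.
move=> ID' piI hID' hpiI c c'; rewrite hID'.2 frobenius_piE hID.2.
pose g z := gamI (be (t3l c z)).
have gA : additive_map g := additive_comp (tensorDr H3l c) gamI_be_additive.
have gR z a : g (ract z a) = ract (g z) a by rewrite /g -(ract_tensor H3l) gamI_be_ract.
have [N hN] := lift_mapl H3r H2 gA gR.
have piIE : (fun y => piI (be (t3l c y))) =1 (fun y => N (DI y)).
  apply: (tensor_ext H2) => [||u v].
  - exact: additive_comp (additive_comp (tensorDr H3l c) beA) hpiI.1.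
  - exact: additive_comp hDI.1 hN.1.
  by rewrite beE hpiI.2 hDI.2 hN.2 frobenius_piE hID.2.
have N_be u : (fun z => N (be (t3l u z))) =1 (lact (gamma (t2 c u))).
  apply: (tensor_ext H2) => [||p q].
  - exact: additive_comp (additive_comp (tensorDr H3l u) beA) hN.1.
  - exact: lactDr.
  by rewrite beE hN.2 /g gamI_be_t3l (lact_tensor H2).
have DeltaE : (fun y => Delta (g y)) =1 (fun y => N (be (ID y))).
  apply: (tensor_ext H2) => [||u v].
  - exact: additive_comp gA Delta_additive.
  - exact: additive_comp (additive_comp hID.1 beA) hN.1.
  by rewrite /g gamI_be_t3l Delta_lact hID.2 N_be.
by rewrite piIE -[DI (Delta c')]alK -(coassoc hID hDI) -DeltaE.
Qed.

Lemma frobenius_pi_unit c : frobenius_pi (t2 c e) = c /\ frobenius_pi (t2 e c) = c.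
Proof.
case: Hfr => _ _ _ gamma_e; split.
- have [F hF] := exists_Ieps.
  rewrite frobenius_pi_t2 -[RHS](counitR hF); move: (Delta c).
  apply: (tensor_ext H2) => [||u v].
  + exact: additive_comp (tensorDl H3r e) Igam_al_additive.
  + exact: hF.1.
  by rewrite Igam_al_t3r (gamma_e v).1 hF.2.
- have [G hG] := exists_epsI.
  rewrite frobenius_piE hID.2 -[RHS](counitL hG); move: (Delta c).
  apply: (tensor_ext H2) => [||u v].
  + exact: additive_comp (tensorDr H3l e) gamI_be_additive.
  + exact: hG.1.
  by rewrite gamI_be_t3l (gamma_e u).2 hG.2.
Qed.

Lemma eps_frobenius_pi : (fun x => eps (frobenius_pi x)) = gamma.
Proof.
case: Hfr => -[gA gL _] _ _ _; case: eps_bimod => epsA _ epsR.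
have [G hG] := exists_epsI.
apply: (tensor_map_eq H2); [exact: additive_comp frobenius_pi_additive epsA | exact: gA |].
move=> c c'; rewrite frobenius_pi_t2 -[in RHS](counitL hG c); move: (Delta c).
apply: (tensor_ext H2) => [||u v].
- exact: additive_comp (additive_comp (tensorDl H3r c') Igam_al_additive) epsA.
- exact: additive_comp (additive_comp hG.1 (tensorDl H2 c')) gA.
by rewrite Igam_al_t3r epsR hG.2 -(lact_tensor H2) gL.
Qed.

End FrobeniusSystem.

Lemma pi_theta_of_reduced_frobenius gamma e :
  reduced_frobenius t2 t3l t3r al be Delta eps gamma e ->
  exists pi Theta, [/\ pi_theta t2 t3l t3r al be Delta pi Theta,
                       (fun x => eps (pi x)) = gamma & Theta 1 = e].
Proof.
move=> Hfr; case: (Hfr) => -[gA gL gR] e_central _ _.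
have [DI hDI] := exists_DeltaI; have [ID hID] := exists_IDelta.
have [Igam hIg] := lift_ract_toA H3l gA gL.
have [gamI hgI] := lift_lact_toA H3r gA gR.
exists (frobenius_pi DI Igam), (lact^~ e); split; last exact: lact1.
- split.
  + exact: (frobenius_pi_bimod Hfr hDI hIg).
  + exact: (central_bimod_map_fromA e_central).
  + exact: (frobenius_pi_left_colinear hDI hID hIg).
  + exact: (frobenius_pi_right_colinear Hfr hDI hID hIg hgI).
  + by rewrite lact1; apply: (frobenius_pi_unit Hfr hDI hID hIg hgI).
- exact: (eps_frobenius_pi Hfr hDI hIg).
Qed.

End Coring.

Unset Implicit Arguments.

Theorem lemma2p4 (A : pzRingType) (C C2 C3l C3r : bimod A)
  (t2 : C -> C -> C2) (t3l : C -> C2 -> C3l) (t3r : C2 -> C -> C3r)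
  (al : C3r -> C3l) (be : C3l -> C3r) (Delta : C -> C2) (eps : C -> A) :
  is_tensor t2 -> is_tensor t3l -> is_tensor t3r ->
  additive_map al -> (forall x y z, al (t3r (t2 x y) z) = t3l x (t2 y z)) ->
  additive_map be -> (forall x y z, be (t3l x (t2 y z)) = t3r (t2 x y) z) ->
  is_coring t2 t3l t3r al Delta eps ->
  [/\ (forall pi Theta, pi_theta t2 t3l t3r al be Delta pi Theta ->
         reduced_frobenius t2 t3l t3r al be Delta eps (fun x => eps (pi x)) (Theta 1)),
      (forall pi Theta pi' Theta',
         pi_theta t2 t3l t3r al be Delta pi Theta ->
         pi_theta t2 t3l t3r al be Delta pi' Theta' ->
         (fun x => eps (pi x)) = (fun x => eps (pi' x)) -> Theta 1 = Theta' 1 ->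
         pi = pi' /\ Theta = Theta')
    & (forall gamma e, reduced_frobenius t2 t3l t3r al be Delta eps gamma e ->
         exists pi Theta, [/\ pi_theta t2 t3l t3r al be Delta pi Theta,
                              (fun x => eps (pi x)) = gamma & Theta 1 = e])].
Proof.
move=> H2 H3l H3r alA alE beA beE Hcor; split.
- exact: reduced_frobenius_of_pi_theta.
- exact: pi_theta_inj.
- exact: pi_theta_of_reduced_frobenius.
Qed.
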